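(* Let $n\ge1$ and define $\check{\mathbf{H}}_c,\check{\mathbf{H}}_s\in\mathbb{R}^{n\times n}$ by $(\check{\mathbf{H}}_c)_{j,k}=\frac{1}{\sqrt n}\cos\frac{2jk\pi}{n}$, $(\check{\mathbf{H}}_s)_{j,k}=\frac{1}{\sqrt n}\sin\frac{2jk\pi}{n}$ for $j,k=0,\dots,n-1$, $\check{\mathbf{H}}^{\pm}:=\check{\mathbf{H}}_c\pm\check{\mathbf{H}}_s$, and $\check{\mathbf{F}}:=\check{\mathbf{H}}_c+i\check{\mathbf{H}}_s\in\mathbb{C}^{n\times n}$. Let $\mathbf{A}=\operatorname{Circ}(\mathbf{a})\in\mathbb{R}^{n\times n}$ be a symmetric circulant matrix with first column $\mathbf{a}=(a_k)_{k=0}^{n-1}$, $a_{n-i}=a_i$ for $i=1,\dots,n-1$, and let $\boldsymbol{\Lambda}:=\sqrt n\,\operatorname{Diag}(\check{\mathbf{H}}_c\mathbf{a})$. Then $\check{\mathbf{H}}^+\mathbf{A}\check{\mathbf{H}}^-=\check{\mathbf{H}}^-\mathbf{A}\check{\mathbf{H}}^+=\boldsymbol{\Lambda}\check{\mathbf{F}}^2=\check{\mathbf{F}}^2\boldsymbol{\Lambda}$.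
   Context: $\operatorname{Circ}(\mathbf{a})$ is the circulant matrix with first column $\mathbf{a}$, i.e. $(\mathbf{A})_{j,k}=a_{(j-k)\bmod n}$. $\operatorname{Diag}(\mathbf{v})$ is the diagonal matrix with diagonal $\mathbf{v}$. *)

From HB Require Import structures.
From mathcomp Require Import all_boot all_order all_algebra.
From mathcomp Require Import reals trigo.
From mathcomp Require Import complex.
Set Implicit Arguments. Unset Strict Implicit. Unset Printing Implicit Defensive.
Import Order.TTheory GRing.Theory Num.Theory.
Local Open Scope ring_scope.

Lemma ord_pos n (i : 'I_n) : (0 < n)%N.
Proof. by case: i => m /=; case: n. Qed.

Definition subord n (j k : 'I_n) : 'I_n :=
  Ordinal (ltn_pmod (j + n - k)%N (ord_pos j)).

Definition Circ (R : Type) n (a : 'cV[R]_n) : 'M[R]_n :=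
  \matrix_(j, k) a (subord j k) 0.

Section Defs.
Variable R : realType.
Variable n : nat.

Definition Hc : 'M[R]_n :=
  \matrix_(j, k) ((Num.sqrt (n%:R))^-1 *
                  cos (2 * (j : nat)%:R * (k : nat)%:R * pi / n%:R)).
Definition Hs : 'M[R]_n :=
  \matrix_(j, k) ((Num.sqrt (n%:R))^-1 *
                  sin (2 * (j : nat)%:R * (k : nat)%:R * pi / n%:R)).
Definition Hp : 'M[R]_n := Hc + Hs.
Definition Hm : 'M[R]_n := Hc - Hs.

Definition toC (x : R) : R[i] := Complex x 0.
Definition iC : R[i] := Complex 0 1.

Definition Fmx : 'M[R[i]]_n := map_mx toC Hc + iC *: map_mx toC Hs.

Definition Lambda (a : 'cV[R]_n) : 'M[R]_n :=
  Num.sqrt (n%:R) *: diag_mx (Hc *m a)^T.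
End Defs.

(* Both Hc and Hs diagonalise the symmetric circulant A with the same
   eigenvalues: reindexing the product A Hc (resp. A Hs) by l = j - m and
   expanding cos (resp. sin) of a difference leaves the cosine transform of a,
   which gives Lambda, plus a sine sum of the even vector a, which vanishes.
   Orthogonality of the discrete cosines and sines gives Hc Hs = Hs Hc = 0 and
   Hc^2 - Hs^2 = J, the reversal matrix j |-> -j mod n; hence
   H+ A H- = H+ H- Lambda = J Lambda = H- A H+ and F^2 = J.  Finally Lambda
   commutes with J because its diagonal is an even function of the index. *)

From HB Require Import structures.
From mathcomp Require Import all_boot all_order all_algebra.
From mathcomp Require Import reals trigo.
From mathcomp Require Import complex.
From mathcomp Require Import ring lra zify.
Set Implicit Arguments. Unset Strict Implicit. Unset Printing Implicit Defensive.
Import Order.TTheory GRing.Theory Num.Theory.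
Local Open Scope ring_scope.

Lemma sumr_odd_involution_eq0 (R : numDomainType) (I : finType)
    (s : I -> I) (F : I -> R) :
  involutive s -> (forall i, F (s i) = - F i) -> \sum_i F i = 0.
Proof.
move=> sK Fs; have : \sum_i F i = - \sum_i F i.
  by rewrite {1}(reindex_inj (inv_inj sK)) -sumrN; apply: eq_bigr => i _; rewrite Fs.
by move/eqP; rewrite -subr_eq0 opprK -mulr2n mulrn_eq0 => /eqP.
Qed.

Lemma sum_cos_mul_eq0 (R : realType) (n r : nat) (t : R) :
  n%:R * t = pi *+ 2 *+ r -> sin (t / 2) != 0 -> \sum_(m < n) cos (m%:R * t) = 0.
Proof.
move=> nt st0; set h := t / 2.
pose g (m : nat) := sin (m%:R * t - h).
have gS m : g m.+1 - g m = cos (m%:R * t) * (sin h *+ 2).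
  have -> : g m.+1 = sin (m%:R * t + h) by rewrite /g -natr1 /h; congr sin; field.
  by rewrite /g sinD sinB; ring.
have gn : g n = g 0 by rewrite /g nt mul0r sub0r addrC (periodicn (@sinD2pi R)).
have : (\sum_(m < n) cos (m%:R * t)) * (sin h *+ 2) = 0.
  rewrite mulr_suml -(big_mkord xpredT (fun m => cos (m%:R * t) * (sin h *+ 2))).
  by rewrite (@telescope_sumr_eq _ 0 n g) ?gn ?subrr // => k _; rewrite gS.
by move/eqP; rewrite mulf_eq0 mulrn_eq0 (negbTE st0) /= orbF => /eqP.
Qed.

Section Subord.
Variable n : nat.
Implicit Types j k : 'I_n.

Lemma subordK_mod j k : (subord j k + k = j %[mod n])%N.
Proof.
by rewrite /= modnDml subnK ?modnDr // (leq_trans (ltnW (ltn_ord k)) (leq_addl _ _)).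
Qed.

Lemma subord_involutive j : involutive (subord j).
Proof.
move=> k; have : (subord j (subord j k) = k %[mod n])%N.
  by apply/eqP; rewrite -(eqn_modDr (subord j k)) [(k + _)%N]addnC !subordK_mod.
by rewrite !modn_small // => /val_inj.
Qed.

Lemma subordK_modMr j k (p : nat) : (subord j k * p + k * p = j * p %[mod n])%N.
Proof. by rewrite -mulnDl -modnMml subordK_mod modnMml. Qed.
End Subord.

Lemma map_mx_toC (R : realType) m k (M : 'M[R]_(m, k)) :
  map_mx (@toC R) M = map_mx (real_complex R) M.
Proof. by apply/matrixP => i j; rewrite !mxE. Qed.

Lemma iC_sqr (R : realType) : iC R * iC R = -1.
Proof.
by apply/eqP; rewrite eq_complex /= !mul0r !mulr0 addr0 sub0r oppr0 mulr1 !eqxx.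
Qed.

Definition flip_mx (R : pzRingType) n : 'M[R]_n := \matrix_(j, k) (n %| j + k)%:R.

Section DiscreteFourier.
Variables (R : realType) (n : nat).
Hypothesis n_gt0 : (0 < n)%N.

Let w : R := 2 * pi / n%:R.

Lemma w_mul_n : w * n%:R = pi *+ 2.
Proof. by rewrite /w mulfVK ?pnatr_eq0 -?lt0n // mulr2n mulrDl mul1r. Qed.

Lemma periodic_w_sub (f : R -> R) (x y z : nat) :
  periodic f (pi *+ 2) -> (x + y = z %[mod n])%N ->
  f (w * x%:R) = f (w * z%:R - w * y%:R).
Proof.
move=> fP exyz.
have wMn q : w * (q * n)%:R = pi *+ 2 *+ q by rewrite natrM mulrCA w_mul_n mulr_natl.
have : w * (x + y + z %/ n * n)%:R = w * (z + (x + y) %/ n * n)%:R.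
  by congr (w * _%:R); rewrite {2}(divn_eq z n) {1}(divn_eq (x + y) n) exyz; ring.
rewrite !natrD !mulrDr !wMn => e.
rewrite -(periodicn fP (z %/ n)) -[RHS](periodicn fP ((x + y) %/ n)); congr f; lra.
Qed.

Lemma periodic_w_mod (f : R -> R) (x z : nat) :
  periodic f (pi *+ 2) -> (x = z %[mod n])%N -> f (w * x%:R) = f (w * z%:R).
Proof. by move=> fP e; rewrite (@periodic_w_sub f x 0 z fP) ?addn0 // mulr0 subr0. Qed.

Lemma sum_cos_w (p : nat) : \sum_(m < n) cos (w * (m * p)%:R) = (n %| p)%:R * n%:R.
Proof.
rewrite (eq_bigr (fun m : 'I_n => cos (m%:R * (w * (p %% n)%:R)))); last first.
  move=> m _; rewrite (@periodic_w_mod _ _ (m * (p %% n)) (@cosD2pi R)) ?modnMmr //.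
  by rewrite natrM mulrCA.
rewrite /dvdn; have [->|r_gt0] := posnP (p %% n)%N.
  under eq_bigr do rewrite !mulr0 cos0.
  by rewrite sumr_const card_ord mul1r.
rewrite mul0r; apply: (sum_cos_mul_eq0 (r := p %% n)).
  by rewrite mulrA [n%:R * _]mulrC w_mul_n mulr_natr.
have n_gt0R : (0 : R) < n%:R by rewrite ltr0n.
have -> : w * (p %% n)%:R / 2 = pi * ((p %% n)%:R / n%:R).
  by rewrite /w; field; rewrite gt_eqF.
rewrite gt_eqF // sin_gt0_pi // mulr_gt0 ?pi_gt0 ?divr_gt0 ?ltr0n //=.
by rewrite gtr_pMr ?pi_gt0 // ltr_pdivrMr // mul1r ltr_nat ltn_pmod.
Qed.

Let s : R := (Num.sqrt n%:R)^-1.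
Local Notation C := (Hc R n).
Local Notation S := (Hs R n).
Local Notation J := (flip_mx R n).
Local Notation oppI := (subord (Ordinal n_gt0)).

Lemma sqr_s_mul_n : s ^+ 2 * n%:R = 1.
Proof. by rewrite exprVn sqr_sqrtr ?ler0n // mulVf // pnatr_eq0 -lt0n. Qed.

Lemma HcE : C = \matrix_(j, k) (s * cos (w * (j * k)%:R)).
Proof. by apply/matrixP => j k; rewrite !mxE natrM /w; congr (_ * cos _); ring. Qed.

Lemma HsE : S = \matrix_(j, k) (s * sin (w * (j * k)%:R)).
Proof. by apply/matrixP => j k; rewrite !mxE natrM /w; congr (_ * sin _); ring. Qed.

Lemma cos_w_oppI (m : 'I_n) (k : nat) :
  cos (w * (oppI m * k)%:R) = cos (w * (m * k)%:R).
Proof.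
by rewrite (periodic_w_sub (@cosD2pi R) (subordK_modMr _ _ _)) /= mul0n mulr0 sub0r cosN.
Qed.

Lemma sin_w_oppI (m : 'I_n) (k : nat) :
  sin (w * (oppI m * k)%:R) = - sin (w * (m * k)%:R).
Proof.
by rewrite (periodic_w_sub (@sinD2pi R) (subordK_modMr _ _ _)) /= mul0n mulr0 sub0r sinN.
Qed.

Lemma sum_even_mul_sin_w (f : 'I_n -> R) (k : nat) : (forall m, f (oppI m) = f m) ->
  \sum_(m < n) f m * sin (w * (m * k)%:R) = 0.
Proof.
move=> f_even; apply: (sumr_odd_involution_eq0 (subord_involutive (Ordinal n_gt0))) => m.
by rewrite f_even sin_w_oppI mulrN.
Qed.

Lemma sum_cos_mul_sin_w (j k : nat) :
  \sum_(m < n) cos (w * (j * m)%:R) * sin (w * (m * k)%:R) = 0.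
Proof. by apply: sum_even_mul_sin_w => m; rewrite ![(j * _)%N]mulnC cos_w_oppI. Qed.

Lemma Hc_sqr_sub_Hs_sqr : C *m C - S *m S = J.
Proof.
rewrite HcE HsE; apply/matrixP => j k; rewrite !mxE -sumrB.
rewrite (eq_bigr (fun m : 'I_n => s ^+ 2 * cos (w * (m * (j + k))%:R))) => [|m _];
  last first.
  by rewrite !mxE mulnDr natrD mulrDr cosD [(j * m)%N]mulnC; ring.
by rewrite -mulr_sumr sum_cos_w // mulrCA sqr_s_mul_n mulr1.
Qed.

Lemma Hc_mul_Hs : C *m S = 0.
Proof.
rewrite HcE HsE; apply/matrixP => j k; rewrite !mxE.
under eq_bigr do rewrite !mxE mulrACA.
by rewrite -mulr_sumr sum_cos_mul_sin_w mulr0.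
Qed.

Lemma Hs_mul_Hc : S *m C = 0.
Proof.
rewrite HcE HsE; apply/matrixP => j k; rewrite !mxE.
under eq_bigr do
  rewrite !mxE mulrACA [_ * cos _]mulrC [(j * _)%N]mulnC [(_ * k)%N]mulnC.
by rewrite -mulr_sumr sum_cos_mul_sin_w mulr0.
Qed.

Lemma Hp_mul_Hm : Hp R n *m Hm R n = J.
Proof.
by rewrite mulmxBr !mulmxDl Hc_mul_Hs Hs_mul_Hc addr0 add0r Hc_sqr_sub_Hs_sqr.
Qed.

Lemma Hm_mul_Hp : Hm R n *m Hp R n = J.
Proof.
by rewrite mulmxDr !mulmxBl Hc_mul_Hs Hs_mul_Hc subr0 sub0r Hc_sqr_sub_Hs_sqr.
Qed.

Lemma Fmx_sqr : Fmx R n *m Fmx R n = map_mx (@toC R) J.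
Proof.
rewrite /Fmx !map_mx_toC mulmxDl !mulmxDr -!scalemxAl -!scalemxAr scalerA iC_sqr scaleN1r.
rewrite -!map_mxM Hc_mul_Hs Hs_mul_Hc !map_mx0 !scaler0 addr0 add0r.
rewrite -map_mxB Hc_sqr_sub_Hs_sqr.
(* entrywise: comparing the two convertible [map_mx] whole makes conversion diverge *)
by apply/matrixP => i j; rewrite !mxE.
Qed.

Section SymmetricCirculant.
Variable a : 'cV[R]_n.
Hypothesis a_sym : forall i j : 'I_n, (i + j)%N = n -> a i 0 = a j 0.

Lemma a_oppI (m : 'I_n) : a (oppI m) 0 = a m 0.
Proof.
have [m0|m_gt0] := posnP m.
  by have -> : oppI m = m by apply: val_inj; rewrite /= m0 subn0 modnn.
apply: a_sym; have := ltn_ord m.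
by rewrite /= add0n modn_small; lia.
Qed.

Let lambda (k : 'I_n) := \sum_(l < n) cos (w * (k * l)%:R) * a l 0.

Lemma Lambda_diag : Lambda a = diag_mx (\row_k lambda k).
Proof.
apply/matrixP => i k; rewrite /Lambda HcE !mxE; case: eqP => _; last by rewrite mulr0.
rewrite mulr_sumr; apply: eq_bigr => l _; rewrite !mxE mulrA mulrA mulfV ?mul1r //.
by rewrite sqrtr_eq0 -ltNge ltr0n.
Qed.

Lemma Circ_mul_Hc : Circ a *m C = C *m Lambda a.
Proof.
rewrite Lambda_diag mul_mx_diag HcE; apply/matrixP => j k; rewrite !mxE.
rewrite (reindex_inj (inv_inj (subord_involutive j))) /=.
rewrite (eq_bigr (fun l : 'I_n => s * cos (w * (j * k)%:R) * (cos (w * (k * l)%:R) * a l 0)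
    + s * sin (w * (j * k)%:R) * (a l 0 * sin (w * (l * k)%:R)))) => [|l _]; last first.
  rewrite !mxE subord_involutive (periodic_w_sub (@cosD2pi R) (subordK_modMr _ _ _)) cosB.
  by rewrite [(k * l)%N]mulnC; ring.
rewrite big_split -!mulr_sumr /= sum_even_mul_sin_w ?mulr0 ?addr0 //.
exact: a_oppI.
Qed.

Lemma Circ_mul_Hs : Circ a *m S = S *m Lambda a.
Proof.
rewrite Lambda_diag mul_mx_diag HsE; apply/matrixP => j k; rewrite !mxE.
rewrite (reindex_inj (inv_inj (subord_involutive j))) /=.
rewrite (eq_bigr (fun l : 'I_n => s * sin (w * (j * k)%:R) * (cos (w * (k * l)%:R) * a l 0)
    - s * cos (w * (j * k)%:R) * (a l 0 * sin (w * (l * k)%:R)))) => [|l _]; last first.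
  rewrite !mxE subord_involutive (periodic_w_sub (@sinD2pi R) (subordK_modMr _ _ _)) sinB.
  by rewrite [(k * l)%N]mulnC; ring.
rewrite sumrB -!mulr_sumr /= sum_even_mul_sin_w ?mulr0 ?subr0 //.
exact: a_oppI.
Qed.

Lemma Lambda_mul_flip : Lambda a *m J = J *m Lambda a.
Proof.
rewrite Lambda_diag mul_mx_diag mul_diag_mx; apply/matrixP => j k; rewrite !mxE.
have [jk_dvd|] := boolP (n %| j + k)%N; last by rewrite mulr0 mul0r.
rewrite mulr1 mul1r; apply: eq_bigr => l _; congr (_ * _).
rewrite (@periodic_w_sub _ _ (k * l) 0 (@cosD2pi R)) ?mulr0 ?sub0r ?cosN //.
by rewrite -mulnDl mod0n; apply/eqP; exact: dvdn_mulr.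
Qed.

Lemma Hp_Circ_Hm : Hp R n *m Circ a *m Hm R n = J *m Lambda a.
Proof. by rewrite -mulmxA mulmxBr Circ_mul_Hc Circ_mul_Hs -mulmxBl mulmxA Hp_mul_Hm. Qed.

Lemma Hm_Circ_Hp : Hm R n *m Circ a *m Hp R n = J *m Lambda a.
Proof. by rewrite -mulmxA mulmxDr Circ_mul_Hc Circ_mul_Hs -mulmxDl mulmxA Hm_mul_Hp. Qed.

End SymmetricCirculant.
End DiscreteFourier.

Theorem mainTheorem5 (R : realType) (n : nat) (hn : (0 < n)%N)
  (a : 'cV[R]_n)
  (ha : forall i j : 'I_n, (i + j)%N = n -> a i 0 = a j 0) :
  let A := Circ a in
  let F := Fmx R n in
  let L := map_mx (@toC R) (Lambda a) in
  map_mx (@toC R) (Hp R n *m A *m Hm R n) = map_mx (@toC R) (Hm R n *m A *m Hp R n) /\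
  map_mx (@toC R) (Hm R n *m A *m Hp R n) = L *m (F *m F) /\
  L *m (F *m F) = (F *m F) *m L.
Proof.
move=> A F L; rewrite /A /F /L Fmx_sqr // Hp_Circ_Hm // Hm_Circ_Hp //.
by rewrite !map_mx_toC -!map_mxM Lambda_mul_flip.
Qed.
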